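(* Let $\epsilon>0$ and let $(Q,K)$, $c(K)$ and $Y=t\,c'(K)\partial_Q-\partial_K$ be as described in the context. Let $\bar f(t,Q,K)$ be a solution of $$\partial_t\bar f - c(K)\,\partial_Q\bar f = 0$$ on $[0,\infty)\times(\mathbb{R}/2\pi\mathbb{Z})\times(0,\infty)$, whose initial data, expressed in $(x,v)$ variables as $f_0(x,v)=\bar f(0,Q,K)$, is smooth, nonnegative, and satisfies $\mathrm{supp}(f_0)\subseteq\{(x,v): c_s\leq \frac{v^2}{2}+\Phi(x)\leq c_s^{-1}\}$ for some $c_s>0$. Then $$\sup_{(t,Q,K)\in[0,\infty)\times\mathbb{T}^1\times[c_s,c_s^{-1}]}\ \sum_{\ell\leq 2}|Y^\ell\bar f|(t,Q,K)\lesssim \sup_{(x,v)\in\mathbb{R}\times\mathbb{R}}\ \sum_{|\alpha|+|\beta|\leq 2}|\partial_x^\alpha\partial_v^\beta f_0|(x,v),$$ where the implicit constant depends only on $\epsilon$ and $c_s$.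
   Context: Let $\Phi(x)=\frac{x^2}{2}+\frac{\epsilon x^4}{2}$ and $H(x,v)=\frac{v^2}{2}+\Phi(x)$. For $(x,v)\neq(0,0)$ define the angle $\chi\in\mathbb{R}/2\pi\mathbb{Z}$ by $\chi=\arcsin\big(v/\sqrt{2H}\big)$ if $x>0$ and $\chi=\pi-\arcsin\big(v/\sqrt{2H}\big)$ if $x\leq 0$; then $(x,v)\mapsto(\chi,H)$ is a bijection onto $(\mathbb{R}/2\pi\mathbb{Z})\times(0,\infty)$, and we write $x=x(\chi,H)$. Set $a(\chi,H)=\sqrt{2}\,\frac{1+2\epsilon x^2}{\sqrt{1+\epsilon x^2}}$ with $x=x(\chi,H)$. Define $c(H)>0$ by $c(H)\int_0^{2\pi}\frac{\mathrm{d}\chi}{a(\chi,H)}=2\pi$, and $Q(\chi,H)=c(H)\int_0^{\chi}\frac{\mathrm{d}\chi'}{a(\chi',H)}$ (well defined modulo $2\pi$), $K=H$. $\mathbb{T}^1=\mathbb{R}/2\pi\mathbb{Z}$. Partial derivatives $\partial_Q,\partial_K$ are taken in the coordinates $(t,Q,K)$. *)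

From Stdlib Require Import Reals Lra List ClassicalEpsilon.
From Coquelicot Require Import Coquelicot.
Open Scope R_scope.

Definition Phi (eps x : R) : R := x ^ 2 / 2 + eps * x ^ 4 / 2.
Definition Hen (eps x v : R) : R := v ^ 2 / 2 + Phi eps x.

(* the angle chi(x,v), as a real representative of its class mod 2 pi *)
Definition chi (eps x v : R) : R :=
  if Rlt_dec 0 x then asin (v / sqrt (2 * Hen eps x v))
  else PI - asin (v / sqrt (2 * Hen eps x v)).

Definition eq_mod2pi (a b : R) : Prop := exists k : Z, a = b + 2 * PI * IZR k.

Definition x_of (eps ch H : R) : R :=
  epsilon (inhabits 0)
    (fun x => exists v, (x, v) <> (0, 0) /\ Hen eps x v = H /\ eq_mod2pi (chi eps x v) ch).

Definition a_fun (eps ch H : R) : R :=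
  let x := x_of eps ch H in sqrt 2 * (1 + 2 * eps * x ^ 2) / sqrt (1 + eps * x ^ 2).

Definition c_fun (eps H : R) : R :=
  2 * PI / RInt (fun ch => / a_fun eps ch H) 0 (2 * PI).

Definition Q_fun (eps ch H : R) : R :=
  c_fun eps H * RInt (fun ch' => / a_fun eps ch' H) 0 ch.

Definition Q_of (eps x v : R) : R := Q_fun eps (chi eps x v) (Hen eps x v).
Definition K_of (eps x v : R) : R := Hen eps x v.

Definition Yop (eps : R) (g : R -> R -> R -> R) : R -> R -> R -> R :=
  fun t Q K => t * Derive (c_fun eps) K * Derive (fun q => g t q K) Q
               - Derive (fun k => g t Q k) K.

Definition dx (f : R -> R -> R) : R -> R -> R := fun x v => Derive (fun y => f y v) x.
Definition dv (f : R -> R -> R) : R -> R -> R := fun x v => Derive (fun w => f x w) v.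

(* iterated partial derivative along a word of directions (true = x, false = v) *)
Fixpoint pder (w : list bool) (f : R -> R -> R) : R -> R -> R :=
  match w with
  | nil => f
  | b :: w' => if b then dx (pder w' f) else dv (pder w' f)
  end.

Definition smooth2 (f : R -> R -> R) : Prop :=
  forall w : list bool, forall x v,
    ex_derive (fun y => pder w f y v) x /\ ex_derive (fun u => pder w f x u) v /\
    continuity_2d_pt (pder w f) x v.

Definition C2sum (f : R -> R -> R) (x v : R) : R :=
  Rabs (f x v) + Rabs (dx f x v) + Rabs (dv f x v)
  + Rabs (dx (dx f) x v) + Rabs (dx (dv f) x v) + Rabs (dv (dv f) x v).

(* Along the characteristics the transport equation gives
   fbar(t, Q, K) = g(Q + c(K) t, K) with g = fbar(0, ., .), and
   Y = t c'(K) d_Q - d_K annihilates exactly the K-dependence of the shift, so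
   Y^l fbar(t, Q, K) = (-d_K)^l g(Q + c(K) t, K).  Inverting (x, v) |-> (Q, K)
   explicitly (with y = K cos^2 chi one has x = 2 sqrt K cos chi / sqrt (1 + sqrt (1 + 8 eps y))
   and v = sqrt (2 K) sin chi) shows g(Q, K) = f0(x(Q, K), v(Q, K)) with x, v smooth
   for K > 0 and 2 pi-periodic in Q.  By the chain rule, d_K g and d_K^2 g are bounded
   by the C^2 norm of f0 times the first two K-derivatives of x and v, which are
   continuous and periodic, hence bounded on T^1 x [c_s, 1/c_s]. *)

From Pilot Require Import Defs.
From Stdlib Require Import Reals Lra ZArith Lia ClassicalEpsilon FunctionalExtensionality.
From Coquelicot Require Import Coquelicot.
Open Scope list_scope.
Open Scope R_scope.

(* [Ck n U f]: [f] is C^n on the open region [U]; the partial derivatives are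
   existential witnesses rather than [Derive] terms. *)
Fixpoint Ck (n : nat) (U : R -> R -> Prop) (f : R -> R -> R) : Prop :=
  match n with
  | O => forall x y, U x y -> continuity_2d_pt f x y
  | S n => exists f1 f2 : R -> R -> R,
      (forall x y, U x y -> differentiable_pt_lim f x y (f1 x y) (f2 x y))
      /\ Ck n U f1 /\ Ck n U f2
  end.

Definition upper : R -> R -> Prop := fun _ y => 0 < y.

Lemma Ck_continuity n U f : Ck n U f -> forall x y, U x y -> continuity_2d_pt f x y.
Proof.
  destruct n as [|n]; simpl; auto.
  intros (f1 & f2 & Hd & _) x y Hu. apply differentiable_continuity_pt.
  exists (f1 x y), (f2 x y); auto.
Qed.

Lemma Ck_S n U f : Ck (S n) U f -> Ck n U f.
Proof.
  revert U f; induction n as [|n IH]; intros U f Hf.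
  - exact (Ck_continuity 1 U f Hf).
  - destruct Hf as (f1 & f2 & Hd & H1 & H2). exists f1, f2; auto.
Qed.

Lemma Ck_le n m U f : (m <= n)%nat -> Ck n U f -> Ck m U f.
Proof. induction 1; auto using Ck_S. Qed.

Lemma Ck_ext n U f g : (forall x y, f x y = g x y) -> Ck n U f -> Ck n U g.
Proof.
  intros E. replace g with f; auto.
  do 2 (apply functional_extensionality; intro). auto.
Qed.

Lemma locally_2d_upper x y : 0 < y -> locally_2d (fun _ v => 0 < v) x y.
Proof.
  intros Hy. exists (mkposreal _ Hy). intros u v _ Hv. simpl in Hv.
  apply Rabs_lt_between' in Hv. lra.
Qed.

Lemma Ck_ext_upper n f g :
  (forall x y, 0 < y -> f x y = g x y) -> Ck n upper f -> Ck n upper g.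
Proof.
  destruct n as [|n]; simpl; intros E Hf.
  - intros x y Hy. apply continuity_2d_pt_ext_loc with f; auto.
    apply locally_2d_impl with (2 := locally_2d_upper x y Hy), locally_2d_forall. auto.
  - destruct Hf as (f1 & f2 & Hd & H1 & H2). exists f1, f2. split; auto.
    intros x y Hy. apply differentiable_pt_lim_ext with f; auto.
    apply locally_2d_impl with (2 := locally_2d_upper x y Hy), locally_2d_forall. auto.
Qed.

Lemma differentiable_pt_lim_affine (f : R -> R -> R) x y a b :
  (forall u v, f u v - f x y = a * (u - x) + b * (v - y)) ->
  differentiable_pt_lim f x y a b.
Proof.
  intros E eps. apply locally_2d_forall. intros u v.
  rewrite E, Rminus_eq_0, Rabs_R0.
  apply Rmult_le_pos. apply Rlt_le, cond_pos.
  eapply Rle_trans; [apply Rabs_pos | apply Rmax_l].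
Qed.

Lemma differentiable_pt_lim_mult_id x y : differentiable_pt_lim (fun a b => a * b) x y y x.
Proof.
  intros eps. exists eps. intros u v Hu Hv.
  replace (u * v - x * y - (y * (u - x) + x * (v - y))) with ((u - x) * (v - y)) by ring.
  rewrite Rabs_mult. apply Rmult_le_compat; try apply Rabs_pos.
  - left. exact Hu.
  - apply Rmax_r.
Qed.

Lemma differentiable_pt_lim_opp (f : R -> R -> R) x y a b :
  differentiable_pt_lim f x y a b -> differentiable_pt_lim (fun u v => - f u v) x y (- a) (- b).
Proof.
  intros H.
  replace (- a) with (-1 * a + 0 * a) by ring. replace (- b) with (-1 * b + 0 * b) by ring.
  apply (differentiable_pt_lim_comp (fun p _ => - p) f f); auto.
  apply differentiable_pt_lim_affine. intros; ring.
Qed.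

Lemma Ck_const n U c : Ck n U (fun _ _ => c).
Proof.
  revert c; induction n; intro c; simpl.
  - intros; apply continuity_2d_pt_const.
  - exists (fun _ _ => 0), (fun _ _ => 0). repeat split; auto.
    intros; apply differentiable_pt_lim_affine. intros; ring.
Qed.

Lemma Ck_fst n U : Ck n U (fun x _ => x).
Proof.
  destruct n; simpl.
  - intros; apply continuity_2d_pt_id1.
  - exists (fun _ _ => 1), (fun _ _ => 0). repeat split; try apply Ck_const.
    intros; apply differentiable_pt_lim_affine. intros; ring.
Qed.

Lemma Ck_snd n U : Ck n U (fun _ y => y).
Proof.
  destruct n; simpl.
  - intros; apply continuity_2d_pt_id2.
  - exists (fun _ _ => 0), (fun _ _ => 1). repeat split; try apply Ck_const.
    intros; apply differentiable_pt_lim_affine. intros; ring.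
Qed.

Lemma Ck_plus_op n U : Ck n U (fun a b => a + b).
Proof.
  destruct n; simpl.
  - intros. apply continuity_2d_pt_plus; [apply continuity_2d_pt_id1 | apply continuity_2d_pt_id2].
  - exists (fun _ _ => 1), (fun _ _ => 1). repeat split; try apply Ck_const.
    intros; apply differentiable_pt_lim_affine. intros; ring.
Qed.

Lemma Ck_mult_op n U : Ck n U (fun a b => a * b).
Proof.
  destruct n; simpl.
  - intros. apply continuity_2d_pt_mult; [apply continuity_2d_pt_id1 | apply continuity_2d_pt_id2].
  - exists (fun _ b => b), (fun a _ => a). repeat split; try apply Ck_fst; try apply Ck_snd.
    intros; apply differentiable_pt_lim_mult_id.
Qed.

Lemma Ck_comp n : forall U V f u w, Ck n U f -> Ck n V u -> Ck n V w ->
  (forall x y, V x y -> U (u x y) (w x y)) ->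
  Ck n V (fun x y => f (u x y) (w x y)).
Proof.
  induction n as [|n IH]; intros U V f u w Hf Hu Hw HUV.
  - simpl in *. intros x y Hv eps. destruct (Hf _ _ (HUV x y Hv) eps) as [d Hd].
    apply locally_2d_impl with
      (P := fun a b => Rabs (u a b - u x y) < d /\ Rabs (w a b - w x y) < d).
    + apply locally_2d_forall. intros a b [H1 H2]. now apply Hd.
    + apply locally_2d_and; [apply Hu | apply Hw]; exact Hv.
  - destruct Hf as (f1 & f2 & Df & Hf1 & Hf2).
    destruct Hu as (u1 & u2 & Du & Hu1 & Hu2).
    destruct Hw as (w1 & w2 & Dw & Hw1 & Hw2).
    assert (Hu' : Ck n V u) by (apply Ck_S; exists u1, u2; auto).
    assert (Hw' : Ck n V w) by (apply Ck_S; exists w1, w2; auto).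
    assert (Lin : forall a b c d, Ck n V a -> Ck n V b -> Ck n V c -> Ck n V d ->
      Ck n V (fun x y => a x y * b x y + c x y * d x y)).
    { intros a b c d Ha Hb Hc Hd.
      apply (IH (fun _ _ => True) V (fun p q => p + q)); auto using Ck_plus_op;
        apply (IH (fun _ _ => True) V (fun p q => p * q)); auto using Ck_mult_op. }
    exists (fun x y => f1 (u x y) (w x y) * u1 x y + f2 (u x y) (w x y) * w1 x y),
           (fun x y => f1 (u x y) (w x y) * u2 x y + f2 (u x y) (w x y) * w2 x y).
    split; [|split].
    + intros x y Hv. apply differentiable_pt_lim_comp; auto.
    + apply Lin; auto; [apply (IH U V f1) | apply (IH U V f2)]; auto.
    + apply Lin; auto; [apply (IH U V f1) | apply (IH U V f2)]; auto.
Qed.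

Lemma Ck_plus n V A B : Ck n V A -> Ck n V B -> Ck n V (fun x y => A x y + B x y).
Proof. intros; apply (Ck_comp n (fun _ _ => True)); auto using Ck_plus_op. Qed.

Lemma Ck_mult n V A B : Ck n V A -> Ck n V B -> Ck n V (fun x y => A x y * B x y).
Proof. intros; apply (Ck_comp n (fun _ _ => True)); auto using Ck_mult_op. Qed.

Lemma Ck_opp n V A : Ck n V A -> Ck n V (fun x y => - A x y).
Proof.
  intros H. apply Ck_ext with (fun x y => -1 * A x y); [intros; ring|].
  apply Ck_mult; auto using Ck_const.
Qed.

Lemma Ck_pow n V A k : Ck n V A -> Ck n V (fun x y => A x y ^ k).
Proof. intros H; induction k; simpl; auto using Ck_const, Ck_mult. Qed.

Lemma Ck_unary n (D : R -> Prop) (phi dphi : R -> R) :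
  (forall a, D a -> derivable_pt_lim phi a (dphi a)) ->
  Ck n (fun a _ => D a) (fun a _ => dphi a) -> Ck (S n) (fun a _ => D a) (fun a _ => phi a).
Proof.
  intros Hd Hd'. exists (fun a _ => dphi a), (fun _ _ => 0).
  split; [|split]; auto using Ck_const.
  intros; apply differentiable_pt_lim_proj1_0; auto.
Qed.

Lemma Ck_inv_op n : Ck n (fun a _ => 0 < a) (fun a _ => / a).
Proof.
  induction n.
  - intros x y Hx. apply continuity_2d_pt_inv; [apply continuity_2d_pt_id1 | lra].
  - apply Ck_unary with (dphi := fun a => - (/ a * / a)); [|now apply Ck_opp, Ck_mult].
    intros a Ha. apply is_derive_Reals. auto_derive; [lra | field; lra].
Qed.

Lemma Ck_inv n V A : Ck n V A -> (forall x y, V x y -> 0 < A x y) ->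
  Ck n V (fun x y => / A x y).
Proof.
  intros; apply (Ck_comp n (fun a _ => 0 < a) V (fun a _ => / a) A A); auto using Ck_inv_op.
Qed.

Lemma Ck_sqrt_op n : Ck n (fun a _ => 0 < a) (fun a _ => sqrt a).
Proof.
  induction n.
  - intros x y Hx. apply (continuity_1d_2d_pt_comp sqrt (fun a _ => a)).
    + apply continuity_pt_sqrt. lra.
    + apply continuity_2d_pt_id1.
  - apply Ck_unary with (dphi := fun a => / (2 * sqrt a)).
    + intros a Ha. now apply derivable_pt_lim_sqrt.
    + apply Ck_inv; [apply Ck_mult; auto using Ck_const|].
      intros x y Hx. apply Rmult_lt_0_compat; [lra | now apply sqrt_lt_R0].
Qed.

Lemma Ck_sqrt n V A : Ck n V A -> (forall x y, V x y -> 0 < A x y) ->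
  Ck n V (fun x y => sqrt (A x y)).
Proof.
  intros; apply (Ck_comp n (fun a _ => 0 < a) V (fun a _ => sqrt a) A A); auto using Ck_sqrt_op.
Qed.

Lemma Ck_cos_sin_op n :
  Ck n (fun _ _ => True) (fun a _ => cos a) /\ Ck n (fun _ _ => True) (fun a _ => sin a).
Proof.
  induction n as [|n [IHc IHs]].
  - split; intros x y _; apply (continuity_1d_2d_pt_comp _ (fun a _ => a));
      auto using continuity_2d_pt_id1, continuity_cos, continuity_sin.
  - split.
    + apply (Ck_unary n (fun _ => True) cos (fun a => - sin a)); auto using Ck_opp.
      intros; apply derivable_pt_lim_cos.
    + apply (Ck_unary n (fun _ => True) sin cos); auto.
      intros; apply derivable_pt_lim_sin.
Qed.

Lemma Ck_cos n V A : Ck n V A -> Ck n V (fun x y => cos (A x y)).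
Proof.
  intros; apply (Ck_comp n (fun _ _ => True) V (fun a _ => cos a) A A); auto; apply Ck_cos_sin_op.
Qed.

Lemma Ck_sin n V A : Ck n V A -> Ck n V (fun x y => sin (A x y)).
Proof.
  intros; apply (Ck_comp n (fun _ _ => True) V (fun a _ => sin a) A A); auto; apply Ck_cos_sin_op.
Qed.

Ltac Ck_step :=
  match goal with
  | |- Ck _ _ (fun x y => @?A x y + @?B x y) => apply Ck_plus
  | |- Ck _ _ (fun x y => @?A x y * @?B x y) => apply Ck_mult
  | |- Ck _ _ (fun x y => @?A x y / @?B x y) => apply Ck_mult
  | |- Ck _ _ (fun x y => - @?A x y) => apply Ck_opp
  | |- Ck _ _ (fun x y => @?A x y ^ _) => apply Ck_pow
  | |- Ck _ _ (fun x y => cos (@?A x y)) => apply Ck_cos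
  | |- Ck _ _ (fun x y => sin (@?A x y)) => apply Ck_sin
  | |- Ck _ _ (fun x y => / (@?A x y)) => apply Ck_inv
  | |- Ck _ _ (fun x y => sqrt (@?A x y)) => apply Ck_sqrt
  | |- Ck _ _ (fun x y => x) => apply Ck_fst
  | |- Ck _ _ (fun x y => y) => apply Ck_snd
  | |- Ck _ _ (fun x y => _) => apply Ck_const
  end.
Ltac Ck_auto := repeat Ck_step.

Lemma is_derive_partial1 (f : R -> R -> R) x y lx ly :
  differentiable_pt_lim f x y lx ly -> is_derive (fun z => f z y) x lx.
Proof.
  intros H. apply is_derive_Reals.
  replace lx with (lx * 1 + ly * 0) by ring.
  apply (derivable_pt_lim_comp_2d f (fun t => t) (fun _ => y)); auto.
  - apply derivable_pt_lim_id.
  - apply derivable_pt_lim_const.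
Qed.

Lemma is_derive_partial2 (f : R -> R -> R) x y lx ly :
  differentiable_pt_lim f x y lx ly -> is_derive (fun z => f x z) y ly.
Proof.
  intros H. apply is_derive_Reals.
  replace ly with (lx * 0 + ly * 1) by ring.
  apply (derivable_pt_lim_comp_2d f (fun _ => x) (fun t => t)); auto.
  - apply derivable_pt_lim_const.
  - apply derivable_pt_lim_id.
Qed.

Lemma is_derive_linear_approx (f : R -> R) x l : is_derive f x l ->
  forall eps : posreal, exists d : posreal, forall v, Rabs (v - x) < d ->
    Rabs (f v - f x - l * (v - x)) <= eps * Rabs (v - x).
Proof.
  intros H eps. apply is_derive_Reals in H. destruct (H eps (cond_pos eps)) as [d Hd].
  exists d. intros v Hv. destruct (Req_dec v x) as [->|E].
  - rewrite !Rminus_eq_0, Rmult_0_r, Rminus_0_r, Rabs_R0. lra.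
  - specialize (Hd (v - x) ltac:(lra) Hv). replace (x + (v - x)) with v in Hd by ring.
    replace (f v - f x - l * (v - x)) with (((f v - f x) / (v - x) - l) * (v - x))
      by (field; lra).
    rewrite Rabs_mult. apply Rmult_le_compat_r; [apply Rabs_pos | lra].
Qed.

Lemma differentiable_pt_lim_partials (f p1 : R -> R -> R) x y l2 :
  locally_2d (fun u v => is_derive (fun z => f z v) u (p1 u v)) x y ->
  continuity_2d_pt p1 x y -> is_derive (fun z => f x z) y l2 ->
  differentiable_pt_lim f x y (p1 x y) l2.
Proof.
  intros Hloc Hc Hy eps.
  assert (e2 : 0 < eps / 2) by (destruct eps; simpl; lra).
  destruct (locally_2d_and _ _ x y Hloc (Hc (mkposreal _ e2))) as [d1 Hd1].
  destruct (is_derive_linear_approx _ _ _ Hy (mkposreal _ e2)) as [d2 Hd2]. simpl in Hd2.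
  assert (dp : 0 < Rmin d1 d2) by (apply Rmin_pos; apply cond_pos).
  exists (mkposreal _ dp). simpl. intros u v Hu Hv.
  pose proof (Rmin_l d1 d2). pose proof (Rmin_r d1 d2).
  destruct (MVT_cor4 (fun z => f z v) (fun z => p1 z v) x (Rabs (u - x))) with (b := u)
    as [c [Ec Hcx]]; [intros c Hc'; apply Hd1; lra | lra |].
  assert (A1 : Rabs (p1 c v - p1 x y) < eps / 2) by (apply (Hd1 c v); lra).
  specialize (Hd2 v ltac:(lra)).
  replace (f u v - f x y - (p1 x y * (u - x) + l2 * (v - y))) with
    ((p1 c v - p1 x y) * (u - x) + (f x v - f x y - l2 * (v - y)))
    by (rewrite Rmult_minus_distr_r; lra).
  eapply Rle_trans; [apply Rabs_triang|]. rewrite Rabs_mult.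
  pose proof (Rmax_l (Rabs (u - x)) (Rabs (v - y))).
  pose proof (Rmax_r (Rabs (u - x)) (Rabs (v - y))).
  pose proof (Rabs_pos (u - x)). pose proof (Rabs_pos (v - y)).
  pose proof (Rabs_pos (p1 c v - p1 x y)).
  assert (Rabs (p1 c v - p1 x y) * Rabs (u - x)
          <= eps / 2 * Rmax (Rabs (u - x)) (Rabs (v - y))) by (apply Rmult_le_compat; lra).
  assert (eps / 2 * Rabs (v - y) <= eps / 2 * Rmax (Rabs (u - x)) (Rabs (v - y)))
    by (apply Rmult_le_compat_l; lra).
  lra.
Qed.

(* [dx] and [dv] from Defs are the partial derivatives in the first and second
   variable; below they are applied to functions of (chi, H) and (Q, K) as well. *)
Lemma Ck_upper_partials n f : Ck (S n) upper f ->
  (forall x y, 0 < y -> differentiable_pt_lim f x y (dx f x y) (dv f x y)) /\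
  Ck n upper (dv f).
Proof.
  intros (f1 & f2 & Hd & _ & H2).
  assert (E1 : forall x y, 0 < y -> f1 x y = dx f x y).
  { intros x y Hy. symmetry.
    apply is_derive_unique, (is_derive_partial1 _ _ _ _ (f2 x y)), Hd, Hy. }
  assert (E2 : forall x y, 0 < y -> f2 x y = dv f x y).
  { intros x y Hy. symmetry.
    apply is_derive_unique, (is_derive_partial2 _ _ _ (f1 x y)), Hd, Hy. }
  split.
  - intros x y Hy. rewrite <- E1, <- E2 by exact Hy. now apply Hd.
  - now apply Ck_ext_upper with f2.
Qed.

Lemma Ck_upper_is_derive2 n f x y : Ck (S n) upper f -> 0 < y ->
  is_derive (fun z => f x z) y (dv f x y).
Proof. intros Hf Hy. eapply is_derive_partial2, Ck_upper_partials; eauto. Qed.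

Lemma smooth2_differentiable f w x v : smooth2 f ->
  differentiable_pt_lim (pder w f) x v (pder (true :: w) f x v) (pder (false :: w) f x v).
Proof.
  intros Hs. apply differentiable_pt_lim_partials.
  - apply locally_2d_forall. intros u v'. apply Derive_correct, (Hs w u v').
  - apply (Hs (true :: w)).
  - apply Derive_correct, (Hs w x v).
Qed.

Lemma smooth2_Ck f : smooth2 f -> forall n w, Ck n (fun _ _ => True) (pder w f).
Proof.
  intros Hs n. induction n as [|n IH]; intros w.
  - intros x y _. apply Hs.
  - exists (pder (true :: w) f), (pder (false :: w) f).
    split; auto. intros; now apply smooth2_differentiable.
Qed.

Lemma smooth2_dv_dx f : smooth2 f -> forall x v, dv (dx f) x v = dx (dv f) x v.
Proof.
  intros Hs x v. symmetry. apply (Schwarz f x v).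
  - apply locally_2d_forall. intros u z.
    destruct (Hs nil u z) as [E1 [E2 _]]. destruct (Hs (false :: nil) u z) as [E3 _].
    destruct (Hs (true :: nil) u z) as [_ [E4 _]]. simpl in *. auto.
  - apply (Hs (true :: false :: nil)).
  - apply (Hs (false :: true :: nil)).
Qed.

Lemma continuity_2d_pt_slice1 (f : R -> R -> R) x y :
  continuity_2d_pt f x y -> continuous (fun z => f z y) x.
Proof.
  intros Hc. apply continuity_pt_filterlim. intros e He.
  destruct (Hc (mkposreal e He)) as [r Hr].
  exists r. split; [apply cond_pos|]. intros u [_ Hu]. apply Hr; auto.
  rewrite Rminus_eq_0, Rabs_R0. apply cond_pos.
Qed.

Lemma continuity_2d_bounded (f : R -> R -> R) a b c d : a <= b -> c <= d ->
  (forall x y, a <= x <= b -> c <= y <= d -> continuity_2d_pt f x y) ->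
  exists B, forall x y, a <= x <= b -> c <= y <= d -> Rabs (f x y) <= B.
Proof.
  intros Hab Hcd Hc.
  destruct (uniform_continuity_2d f a b c d Hc (mkposreal 1 Rlt_0_1)) as [del Hdel].
  simpl in Hdel. set (h := del / 2).
  assert (Hh : 0 < h) by (unfold h; destruct del; simpl; lra).
  (* bound on the strips [c, c + N h], each one adding at most 1 *)
  assert (Strip : forall N : nat, exists B, forall x y, a <= x <= b -> c <= y <= d ->
            y <= c + INR N * h -> Rabs (f x y) <= B).
  { induction N as [|N [B HB]].
    - destruct (continuity_ab_maj (fun z => Rabs (f z c)) a b Hab) as [m [Hm _]].
      { intros z Hz. apply continuity_pt_filterlim.
        apply (continuous_comp (fun z => f z c) Rabs); [|apply continuous_Rabs].
        apply continuity_2d_pt_slice1, Hc; lra. }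
      exists (Rabs (f m c)). intros x y Hx Hy Hy'. simpl in Hy'.
      replace y with c by lra. now apply Hm.
    - exists (B + 1). intros x y Hx Hy Hy'.
      rewrite S_INR, Rmult_plus_distr_r, Rmult_1_l in Hy'.
      destruct (Rle_dec y (c + INR N * h)) as [Hle|Hlt]; [specialize (HB x y Hx Hy Hle); lra|].
      apply Rnot_le_lt in Hlt.
      assert (Hy0 : c <= c + INR N * h <= d) by (pose proof (pos_INR N); split; nra).
      specialize (HB x _ Hx Hy0 (Rle_refl _)).
      assert (Rabs (f x y - f x (c + INR N * h)) < 1).
      { apply Hdel; auto. rewrite Rminus_eq_0, Rabs_R0; apply cond_pos.
        rewrite Rabs_pos_eq; unfold h in *; lra. }
      pose proof (Rabs_triang (f x y - f x (c + INR N * h)) (f x (c + INR N * h))).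
      replace (f x y - f x (c + INR N * h) + f x (c + INR N * h)) with (f x y) in * by ring.
      lra. }
  assert (Hq : 0 <= (d - c) / h) by (apply Rdiv_le_0_compat; lra).
  destruct (nfloor_ex _ Hq) as [n [_ Hn]].
  destruct (Strip (S n)) as [B HB]. exists B. intros x y Hx Hy. apply HB; auto.
  rewrite S_INR. apply Rmult_lt_compat_r with (r := h) in Hn; auto.
  unfold Rdiv in Hn. rewrite Rmult_assoc, Rinv_l in Hn by lra. lra.
Qed.

Lemma periodic_Z (f : R -> R) T :
  (forall x, f (x + T) = f x) -> forall x (k : Z), f (x + T * IZR k) = f x.
Proof.
  intros Hf.
  assert (N : forall (n : nat) x, f (x + T * INR n) = f x).
  { induction n as [|n IH]; intros x.
    - simpl. now rewrite Rmult_0_r, Rplus_0_r.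
    - rewrite S_INR, <- (IH x), <- (Hf (x + T * INR n)). f_equal. ring. }
  intros x k. destruct (Z_le_gt_dec 0 k) as [Hk|Hk].
  - rewrite <- (Z2Nat.id k Hk), <- INR_IZR_INZ. apply N.
  - rewrite <- (N (Z.to_nat (- k)) (x + T * IZR k)), INR_IZR_INZ, Z2Nat.id by lia.
    f_equal. rewrite opp_IZR. ring.
Qed.

Lemma shift_into_period q : exists k : Z, 0 <= q + 2 * PI * IZR k <= 2 * PI.
Proof.
  pose proof PI_RGT_0 as Hpi.
  destruct (base_Int_part (q / (2 * PI))) as [B1 B2].
  exists (- Int_part (q / (2 * PI)))%Z. rewrite opp_IZR.
  assert (E : q = 2 * PI * (q / (2 * PI))) by (field; lra).
  split.
  - assert (2 * PI * IZR (Int_part (q / (2 * PI))) <= 2 * PI * (q / (2 * PI)))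
      by (apply Rmult_le_compat_l; lra). lra.
  - assert (2 * PI * (q / (2 * PI)) <= 2 * PI * (IZR (Int_part (q / (2 * PI))) + 1))
      by (apply Rmult_le_compat_l; lra). lra.
Qed.

Lemma periodic_bounded (f : R -> R -> R) a b : 0 < a -> Ck 0 upper f ->
  (forall q K, 0 < K -> f (q + 2 * PI) K = f q K) ->
  exists B, 0 <= B /\ forall q K, a <= K <= b -> Rabs (f q K) <= B.
Proof.
  intros Ha Hc Hper. pose proof PI_RGT_0.
  destruct (continuity_2d_bounded f 0 (2 * PI) a (Rmax a b)) as [B HB];
    [lra | apply Rmax_l | intros x y _ Hy; apply Hc; unfold upper; lra |].
  exists (Rabs B). split; [apply Rabs_pos|]. intros q K HK.
  destruct (shift_into_period q) as [k Hk].
  rewrite <- (periodic_Z (fun z => f z K) _ (fun z => Hper z K ltac:(lra)) q k).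
  eapply Rle_trans; [apply HB; auto | apply RRle_abs].
  split; [lra | eapply Rle_trans; [apply HK | apply Rmax_r]].
Qed.

Lemma abs_RInt_le_const_abs (f : R -> R) a b M :
  ex_RInt f a b -> (forall t, Rmin a b <= t <= Rmax a b -> Rabs (f t) <= M) ->
  Rabs (RInt f a b) <= Rabs (b - a) * M.
Proof.
  intros Hi Hb. destruct (Rle_dec a b) as [Hab|Hab].
  - rewrite (Rabs_pos_eq (b - a)) by lra. apply abs_RInt_le_const; auto.
    intros t Ht; apply Hb. rewrite Rmin_left, Rmax_right; lra.
  - assert (E : RInt f a b = - RInt f b a)
      by (rewrite <- (opp_RInt_swap f b a); [reflexivity | now apply ex_RInt_swap]).
    rewrite E, Rabs_Ropp, (Rabs_left (b - a)) by lra.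
    replace (- (b - a)) with (a - b) by ring.
    apply abs_RInt_le_const; [lra | now apply ex_RInt_swap |].
    intros t Ht; apply Hb. rewrite Rmin_right, Rmax_left; lra.
Qed.

Definition prim (k : R -> R -> R) (ch H : R) : R := RInt (fun s => k s H) 0 ch.

Lemma continuous_slice (k : R -> R -> R) H x : Ck 0 upper k -> 0 < H ->
  continuous (fun s => k s H) x.
Proof. intros Hk HH. now apply continuity_2d_pt_slice1, Hk. Qed.

Lemma ex_RInt_slice (k : R -> R -> R) H a b : Ck 0 upper k -> 0 < H ->
  ex_RInt (fun s => k s H) a b.
Proof.
  intros Hk HH. apply (ex_RInt_continuous (V := R_CompleteNormedModule)).
  intros z _. now apply continuous_slice.
Qed.

Lemma prim_0 k H : prim k 0 H = 0.
Proof. apply (RInt_point (V := R_CompleteNormedModule)). Qed.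

Lemma prim_sub_fst k a b H : Ck 0 upper k -> 0 < H ->
  prim k b H - prim k a H = RInt (fun s => k s H) a b.
Proof.
  intros Hk HH. unfold prim.
  rewrite <- (RInt_Chasles (fun s => k s H) 0 a b) by now apply ex_RInt_slice.
  change (plus ?x ?y) with (x + y). ring.
Qed.

Lemma prim_incr k a b H : Ck 0 upper k -> 0 < H -> (forall s, 0 < k s H) -> a < b ->
  prim k a H < prim k b H.
Proof.
  intros Hk HH Hpos Hab.
  assert (0 < RInt (fun s => k s H) a b) by (apply RInt_gt_0; auto using continuous_slice).
  rewrite <- prim_sub_fst in * by auto. lra.
Qed.

Lemma prim_shift k T ch H : Ck 0 upper k -> 0 < H -> (forall s, k (s + T) H = k s H) ->
  prim k (ch + T) H = prim k ch H + prim k T H.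
Proof.
  intros Hk HH Hper.
  enough (E : prim k (ch + T) H - prim k T H = prim k ch H) by lra.
  rewrite prim_sub_fst by auto. unfold prim.
  pose proof (RInt_comp_lin (fun s => k s H) 1 T 0 ch) as E.
  replace (1 * 0 + T) with T in E by ring.
  replace (1 * ch + T) with (ch + T) in E by ring.
  rewrite <- E by now apply ex_RInt_slice.
  apply RInt_ext. intros x _. change (scal 1 ?y) with (1 * y).
  now rewrite !Rmult_1_l, Hper.
Qed.

Lemma prim_partial1 k ch H : Ck 0 upper k -> 0 < H ->
  is_derive (fun z => prim k z H) ch (k ch H).
Proof.
  intros Hk HH. unfold prim.
  apply (is_derive_RInt (fun s => k s H) (fun b => RInt (fun s => k s H) 0 b) 0).
  - apply filter_forall. intros b. apply (RInt_correct (V := R_CompleteNormedModule)).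
    now apply ex_RInt_slice.
  - now apply continuous_slice.
Qed.

Lemma prim_sub_bound k u v ch H R B eta : Ck 0 upper k -> 0 < v -> 0 < H ->
  - R <= u <= R -> - R <= ch <= R ->
  (forall s, - R <= s <= R -> Rabs (k s v) <= B) ->
  (forall s, - R <= s <= R -> Rabs (k s v - k s H) <= eta) ->
  Rabs (prim k u v - prim k ch H) <= Rabs (u - ch) * B + Rabs ch * eta.
Proof.
  intros Hk Hv HH Hu Hch HB Heta.
  assert (Between : forall a b t, - R <= a <= R -> - R <= b <= R ->
            Rmin a b <= t <= Rmax a b -> - R <= t <= R).
  { intros a b t Ha Hb [Ht1 Ht2]. split.
    - eapply Rle_trans; [|exact Ht1]. apply Rmin_glb; lra.
    - eapply Rle_trans; [exact Ht2|]. apply Rmax_lub; lra. }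
  assert (E : prim k u v - prim k ch H
              = RInt (fun s => k s v) ch u + RInt (fun s => k s v - k s H) 0 ch).
  { rewrite <- prim_sub_fst by auto. unfold prim.
    pose proof (RInt_minus (fun s => k s v) (fun s => k s H) 0 ch) as E.
    change (minus ?a ?b) with (a - b) in E.
    rewrite E by now apply ex_RInt_slice. ring. }
  rewrite E. eapply Rle_trans; [apply Rabs_triang | apply Rplus_le_compat].
  - apply abs_RInt_le_const_abs; [now apply ex_RInt_slice|].
    intros t Ht. apply HB, (Between ch u); auto.
  - rewrite <- (Rminus_0_r ch) at 2. apply abs_RInt_le_const_abs.
    + apply (ex_RInt_minus (V := R_CompleteNormedModule) (fun s => k s v) (fun s => k s H));
        now apply ex_RInt_slice.
    + intros t Ht. apply Heta, (Between 0 ch); auto; lra.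
Qed.

Lemma Ck_prim_0 k : Ck 0 upper k -> Ck 0 upper (prim k).
Proof.
  intros Hk ch0 H0 HH0 eps. unfold upper in HH0.
  set (R0 := Rabs ch0 + 1).
  assert (HR0 : 0 < R0) by (unfold R0; pose proof (Rabs_pos ch0); lra).
  assert (Hch0 : - (R0 - 1) <= ch0 <= R0 - 1) by (apply Rabs_le_between; unfold R0; lra).
  assert (Kc : forall x y, - R0 <= x <= R0 -> H0 / 2 <= y <= 2 * H0 -> continuity_2d_pt k x y)
    by (intros x y _ Hy; apply Hk; unfold upper; lra).
  destruct (continuity_2d_bounded k (- R0) R0 (H0 / 2) (2 * H0)) as [B HB]; try lra; auto.
  assert (HB0 : 0 <= B) by (eapply Rle_trans; [apply Rabs_pos | apply (HB 0 H0)]; lra).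
  assert (e1 : 0 < eps / (2 * R0)) by (apply Rdiv_lt_0_compat; [apply cond_pos | lra]).
  destruct (uniform_continuity_2d k (- R0) R0 (H0 / 2) (2 * H0) Kc (mkposreal _ e1)) as [d Hd].
  simpl in Hd.
  assert (e2 : 0 < Rmin (Rmin 1 (eps / (2 * (B + 1)))) (Rmin (H0 / 2) d)).
  { repeat apply Rmin_pos; try lra; try apply cond_pos.
    apply Rdiv_lt_0_compat; [apply cond_pos | lra]. }
  exists (mkposreal _ e2). simpl. intros u v Hu Hv.
  pose proof (Rmin_l (Rmin 1 (eps / (2 * (B + 1)))) (Rmin (H0 / 2) d)).
  pose proof (Rmin_r (Rmin 1 (eps / (2 * (B + 1)))) (Rmin (H0 / 2) d)).
  pose proof (Rmin_l 1 (eps / (2 * (B + 1)))). pose proof (Rmin_r 1 (eps / (2 * (B + 1)))).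
  pose proof (Rmin_l (H0 / 2) d). pose proof (Rmin_r (H0 / 2) d).
  assert (Hv' : H0 / 2 <= v <= 2 * H0) by (apply Rabs_lt_between' in Hv; lra).
  assert (Hu' : - R0 <= u <= R0) by (apply Rabs_lt_between' in Hu; lra).
  eapply Rle_lt_trans.
  { apply (prim_sub_bound k u v ch0 H0 R0 B (eps / (2 * R0))); auto; try lra.
    intros s Hs. apply Rlt_le, Hd; auto; try lra.
    rewrite Rminus_eq_0, Rabs_R0. apply cond_pos. }
  assert (Rabs (u - ch0) * B <= eps / (2 * (B + 1)) * B) by (apply Rmult_le_compat_r; lra).
  assert (eps / (2 * (B + 1)) * B < eps / 2).
  { apply Rlt_le_trans with (eps / (2 * (B + 1)) * (B + 1)); [|right; field; lra].
    apply Rmult_lt_compat_l; [apply Rdiv_lt_0_compat; [apply cond_pos | lra] | lra]. }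
  assert (Rabs ch0 * (eps / (2 * R0)) < eps / 2).
  { apply Rlt_le_trans with (R0 * (eps / (2 * R0))); [|right; field; lra].
    apply Rmult_lt_compat_r; [auto | unfold R0; lra]. }
  lra.
Qed.

Lemma prim_differentiable (k k2 : R -> R -> R) ch H :
  Ck 0 upper k -> Ck 0 upper k2 ->
  (forall s H, 0 < H -> is_derive (fun z => k s z) H (k2 s H)) -> 0 < H ->
  differentiable_pt_lim (prim k) ch H (k ch H) (prim k2 ch H).
Proof.
  intros Hk Hc2 Hk2 HH. apply differentiable_pt_lim_partials.
  - apply locally_2d_impl with (2 := locally_2d_upper ch H HH), locally_2d_forall.
    intros u v Hv. now apply prim_partial1.
  - now apply Hk.
  - unfold prim.
    assert (E : RInt (fun s => k2 s H) 0 ch = RInt (fun t => Derive (fun u => k t u) H) 0 ch).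
    { apply RInt_ext. intros x _. symmetry. now apply is_derive_unique, Hk2. }
    rewrite E. apply (is_derive_RInt_param (fun z s => k s z) 0 ch H).
    + apply filter_imp with (2 := open_gt 0 H HH). intros y Hy t _. eexists; now apply Hk2.
    + intros t _. intros e. destruct (Hc2 t H HH e) as [r Hr].
      assert (Hr' : 0 < Rmin r H) by (apply Rmin_pos; [apply cond_pos | lra]).
      exists (mkposreal _ Hr'). simpl. intros u v Hu Hv.
      pose proof (Rmin_l r H). pose proof (Rmin_r r H).
      apply Rabs_lt_between' in Hu as Hu'.
      simpl. replace (Derive (fun z => k v z) u) with (k2 v u)
        by (symmetry; apply is_derive_unique, Hk2; lra).
      replace (Derive (fun z => k t z) H) with (k2 t H)
        by (symmetry; now apply is_derive_unique, Hk2).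
      apply Hr; lra.
    + apply filter_imp with (2 := open_gt 0 H HH). intros y Hy. now apply ex_RInt_slice.
Qed.

Lemma Ck_prim n k : Ck n upper k -> Ck n upper (prim k).
Proof.
  revert k; induction n as [|n IH]; intros k Hk; [now apply Ck_prim_0|].
  pose proof (Ck_continuity _ _ _ Hk) as Hkc.
  destruct Hk as (k1 & k2 & Dk & Hk1 & Hk2).
  exists k, (prim k2). split; [|split].
  - intros ch H HH. apply prim_differentiable; [exact Hkc | | | exact HH].
    + exact (Ck_le n 0 _ _ (Nat.le_0_l n) Hk2).
    + intros s H' HH'. now apply (is_derive_partial2 _ _ _ (k1 s H')), Dk.
  - apply Ck_S. exists k1, k2. auto.
  - now apply IH.
Qed.

Lemma linearization_lipschitz L1 L2 dc dH dQ eta :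
  0 < L1 -> 0 <= eta <= L1 / 2 ->
  Rabs (dQ - (L1 * dc + L2 * dH)) <= eta * Rmax (Rabs dc) (Rabs dH) ->
  Rmax (Rabs dc) (Rabs dH) <= (2 + 2 * Rabs L2 + L1) / L1 * Rmax (Rabs dQ) (Rabs dH).
Proof.
  intros HL1 Heta Hr. set (r := dQ - (L1 * dc + L2 * dH)) in Hr.
  assert (Lin : L1 * Rabs dc <= Rabs dQ + Rabs L2 * Rabs dH + Rabs r).
  { rewrite <- (Rabs_pos_eq L1), <- !Rabs_mult by lra.
    replace (L1 * dc) with (dQ + - (L2 * dH) + - r) by (unfold r; ring).
    pose proof (Rabs_triang (dQ + - (L2 * dH)) (- r)).
    pose proof (Rabs_triang dQ (- (L2 * dH))). rewrite !Rabs_Ropp in *. lra. }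
  pose proof (Rabs_pos L2). pose proof (Rabs_pos dc). pose proof (Rabs_pos dH).
  pose proof (Rmax_l (Rabs dQ) (Rabs dH)). pose proof (Rmax_r (Rabs dQ) (Rabs dH)).
  apply (Rmult_le_reg_l L1); auto.
  replace (L1 * ((2 + 2 * Rabs L2 + L1) / L1 * Rmax (Rabs dQ) (Rabs dH)))
    with ((2 + 2 * Rabs L2 + L1) * Rmax (Rabs dQ) (Rabs dH)) by (field; lra).
  apply Rmax_case_strong; intros Hm.
  - rewrite Rmax_left in Hr by exact Hm.
    assert (eta * Rabs dc <= L1 / 2 * Rabs dc) by (apply Rmult_le_compat_r; lra).
    assert (Rabs L2 * Rabs dH <= Rabs L2 * Rmax (Rabs dQ) (Rabs dH))
      by (apply Rmult_le_compat_l; lra).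
    nra.
  - nra.
Qed.

Section Inverse.
Variables (Phi Phi1 Phi2 chiF : R -> R -> R).
Hypothesis Phi_diff :
  forall ch H, 0 < H -> differentiable_pt_lim Phi ch H (Phi1 ch H) (Phi2 ch H).
Hypothesis Phi1_pos : forall ch H, 0 < H -> 0 < Phi1 ch H.
Hypothesis Phi_incr : forall a b H, 0 < H -> a < b -> Phi a H < Phi b H.
Hypothesis Phi_chiF : forall Q H, 0 < H -> Phi (chiF Q H) H = Q.

Lemma inverse_continuity Q0 H0 : 0 < H0 -> continuity_2d_pt chiF Q0 H0.
Proof.
  intros HH0 e. set (c0 := chiF Q0 H0).
  assert (E0 : Phi c0 H0 = Q0) by now apply Phi_chiF.
  assert (G1 : Q0 < Phi (c0 + e) H0) by (rewrite <- E0; apply Phi_incr; destruct e; simpl; lra).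
  assert (G2 : Phi (c0 - e) H0 < Q0) by (rewrite <- E0; apply Phi_incr; destruct e; simpl; lra).
  pose proof (Rmin_l (Phi (c0 + e) H0 - Q0) (Q0 - Phi (c0 - e) H0)) as g1.
  pose proof (Rmin_r (Phi (c0 + e) H0 - Q0) (Q0 - Phi (c0 - e) H0)) as g2.
  set (gap := Rmin (Phi (c0 + e) H0 - Q0) (Q0 - Phi (c0 - e) H0)) in *.
  assert (Hg : 0 < gap / 2) by (unfold gap; apply Rmin_case; lra).
  assert (Cont : forall c, continuity_2d_pt Phi c H0).
  { intros c. apply differentiable_continuity_pt. do 2 eexists. now apply Phi_diff. }
  destruct (Cont (c0 + e) (mkposreal _ Hg)) as [d1 Hd1].
  destruct (Cont (c0 - e) (mkposreal _ Hg)) as [d2 Hd2].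
  assert (Hd : 0 < Rmin (Rmin d1 d2) (Rmin (gap / 2) H0)).
  { repeat apply Rmin_pos; try apply cond_pos; lra. }
  exists (mkposreal _ Hd). simpl. intros Q H HQ HH.
  pose proof (Rmin_l (Rmin d1 d2) (Rmin (gap / 2) H0)) as m1.
  pose proof (Rmin_r (Rmin d1 d2) (Rmin (gap / 2) H0)) as m2.
  pose proof (Rmin_l d1 d2) as m3. pose proof (Rmin_r d1 d2) as m4.
  pose proof (Rmin_l (gap / 2) H0) as m5. pose proof (Rmin_r (gap / 2) H0) as m6.
  assert (Hp : 0 < H) by (apply Rabs_lt_between' in HH; lra).
  specialize (Hd1 (c0 + e) H). specialize (Hd2 (c0 - e) H). simpl in Hd1, Hd2.
  rewrite Rminus_eq_0, Rabs_R0 in Hd1, Hd2.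
  specialize (Hd1 (cond_pos _) ltac:(lra)). specialize (Hd2 (cond_pos _) ltac:(lra)).
  apply Rabs_lt_between' in Hd1, Hd2, HQ.
  assert (EQ := Phi_chiF Q H Hp).
  (* Phi (c0 - e) H < Q < Phi (c0 + e) H, which pins chiF Q H by monotonicity *)
  apply Rabs_lt_between'. split.
  - destruct (Rlt_le_dec (c0 - e) (chiF Q H)) as [L|L]; auto.
    destruct (Req_dec (c0 - e) (chiF Q H)) as [E|N]; [rewrite <- E in EQ; lra|].
    assert (Phi (chiF Q H) H < Phi (c0 - e) H) by (apply Phi_incr; lra). lra.
  - destruct (Rlt_le_dec (chiF Q H) (c0 + e)) as [L|L]; auto.
    destruct (Req_dec (c0 + e) (chiF Q H)) as [E|N]; [rewrite <- E in EQ; lra|].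
    assert (Phi (c0 + e) H < Phi (chiF Q H) H) by (apply Phi_incr; lra). lra.
Qed.

Lemma inverse_differentiable Q0 H0 : 0 < H0 ->
  differentiable_pt_lim chiF Q0 H0 (/ Phi1 (chiF Q0 H0) H0)
    (- (Phi2 (chiF Q0 H0) H0 / Phi1 (chiF Q0 H0) H0)).
Proof.
  intros HH0 e. set (c0 := chiF Q0 H0). set (L1 := Phi1 c0 H0). set (L2 := Phi2 c0 H0).
  assert (HL1 : 0 < L1) by now apply Phi1_pos.
  assert (E0 : Phi c0 H0 = Q0) by now apply Phi_chiF.
  set (K := (2 + 2 * Rabs L2 + L1) / L1).
  assert (HK : 0 < K) by (unfold K; pose proof (Rabs_pos L2); apply Rdiv_lt_0_compat; lra).
  pose proof (Rmin_l (L1 / 2) (e * L1 / K)) as m1.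
  pose proof (Rmin_r (L1 / 2) (e * L1 / K)) as m2.
  set (eta := Rmin (L1 / 2) (e * L1 / K)) in *.
  assert (Heta : 0 < eta).
  { apply Rmin_pos; [lra|]. apply Rdiv_lt_0_compat; [apply Rmult_lt_0_compat|]; auto.
    apply cond_pos. }
  destruct (Phi_diff c0 H0 HH0 (mkposreal _ Heta)) as [d1 Hd1]. simpl in Hd1.
  destruct (inverse_continuity Q0 H0 HH0 d1) as [d2 Hd2].
  assert (Hd : 0 < Rmin (Rmin d1 d2) H0) by (repeat apply Rmin_pos; try apply cond_pos; lra).
  exists (mkposreal _ Hd). simpl. intros Q H HQ HH.
  pose proof (Rmin_l (Rmin d1 d2) H0) as m3. pose proof (Rmin_r (Rmin d1 d2) H0) as m4.
  pose proof (Rmin_l d1 d2) as m5. pose proof (Rmin_r d1 d2) as m6.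
  assert (Hp : 0 < H) by (apply Rabs_lt_between' in HH; lra).
  set (c := chiF Q H).
  assert (Hc : Rabs (c - c0) < d1) by (apply Hd2; lra).
  specialize (Hd1 c H Hc ltac:(lra)). fold L1 L2 in Hd1.
  assert (EQ : Phi c H = Q) by now apply Phi_chiF.
  rewrite EQ, E0 in Hd1.
  assert (Lip : Rmax (Rabs (c - c0)) (Rabs (H - H0)) <= K * Rmax (Rabs (Q - Q0)) (Rabs (H - H0)))
    by (apply linearization_lipschitz with eta; auto; lra).
  set (r := Q - Q0 - (L1 * (c - c0) + L2 * (H - H0))) in Hd1.
  set (m := Rmax (Rabs (Q - Q0)) (Rabs (H - H0))) in *.
  replace (c - c0 - (/ L1 * (Q - Q0) + - (L2 / L1) * (H - H0))) with (- r / L1)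
    by (unfold r; field; lra).
  unfold Rdiv. rewrite Rabs_mult, Rabs_Ropp, (Rabs_pos_eq (/ L1))
    by (apply Rlt_le, Rinv_0_lt_compat; lra).
  apply (Rmult_le_reg_r L1); auto. rewrite Rmult_assoc, Rinv_l, Rmult_1_r by lra.
  assert (0 <= m) by (unfold m; eapply Rle_trans; [apply Rabs_pos | apply Rmax_l]).
  apply Rle_trans with (eta * (K * m)).
  { eapply Rle_trans; [apply Hd1|]. apply Rmult_le_compat_l; lra. }
  apply Rle_trans with (e * L1 / K * (K * m)); [apply Rmult_le_compat_r; nra|].
  right. field. lra.
Qed.

Lemma Ck_inverse_step n : Ck n upper chiF -> Ck n upper Phi1 -> Ck n upper Phi2 ->
  Ck (S n) upper chiF.
Proof.
  intros Hchi H1 H2.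
  assert (Comp : forall P, Ck n upper P -> Ck n upper (fun Q H => P (chiF Q H) H)).
  { intros P HP. apply (Ck_comp n upper upper P chiF (fun _ H => H)); auto using Ck_snd. }
  assert (Inv1 : Ck n upper (fun Q H => / Phi1 (chiF Q H) H)).
  { apply Ck_inv; [now apply Comp|]. intros Q H HH. now apply Phi1_pos. }
  exists (fun Q H => / Phi1 (chiF Q H) H), (fun Q H => - (Phi2 (chiF Q H) H / Phi1 (chiF Q H) H)).
  split; [|split]; auto.
  - intros Q H HH. now apply inverse_differentiable.
  - apply Ck_opp, Ck_mult; auto.
Qed.

Lemma Ck_inverse n : Ck n upper Phi1 -> Ck n upper Phi2 -> Ck (S n) upper chiF.
Proof.
  induction n as [|n IH]; intros H1 H2; apply Ck_inverse_step; auto.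
  - intros Q H HH. now apply inverse_continuity.
  - apply IH; now apply Ck_S.
Qed.

End Inverse.

Lemma cos_shift x : cos (x + 2 * PI) = cos x.
Proof. rewrite cos_plus, cos_2PI, sin_2PI. ring. Qed.

Lemma sin_shift x : sin (x + 2 * PI) = sin x.
Proof. rewrite sin_plus, cos_2PI, sin_2PI. ring. Qed.

Lemma eq_mod2pi_sin_cos a b : sin a = sin b -> cos a = cos b -> eq_mod2pi a b.
Proof.
  intros Hs Hc.
  assert (S0 : sin (a - b) = 0) by (rewrite sin_minus, Hs, Hc; ring).
  assert (C1 : cos (a - b) = 1).
  { rewrite cos_minus, Hs, Hc. pose proof (sin2_cos2 b). unfold Rsqr in *. lra. }
  destruct (sin_eq_0_0 _ S0) as [k Hk].
  destruct (Z.Even_or_Odd k) as [[m ->]|[m ->]].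
  - exists m. rewrite mult_IZR in Hk. lra.
  - exfalso. rewrite plus_IZR, mult_IZR in Hk.
    replace (a - b) with (PI + 2 * PI * IZR m) in C1 by lra.
    rewrite (periodic_Z cos _ cos_shift), cos_PI in C1. lra.
Qed.

Section Oscillator.
Variable eps : R.
Hypothesis eps_pos : 0 < eps.

(* With y = H cos^2 chi = Phi(x) one has 1 + 2 eps x^2 = sqrt (1 + 8 eps y) and
   1 + eps x^2 = (1 + sqrt (1 + 8 eps y)) / 2, so that 1 / a becomes explicit. *)
Definition a_inv (s H : R) : R :=
  sqrt (1 + sqrt (1 + 8 * eps * (H * cos s ^ 2))) / (2 * sqrt (1 + 8 * eps * (H * cos s ^ 2))).

Definition c_expl (H : R) : R := 2 * PI / prim a_inv (2 * PI) H.

Definition Q_expl (ch H : R) : R := c_expl H * prim a_inv ch H.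

Definition x_expl (ch H : R) : R :=
  2 * sqrt H * cos ch / sqrt (1 + sqrt (1 + 8 * eps * (H * cos ch ^ 2))).

Definition v_expl (ch H : R) : R := sqrt (2 * H) * sin ch.

Lemma disc_arg_ge_1 s H : 0 < H -> 1 <= 1 + 8 * eps * (H * cos s ^ 2).
Proof.
  intros HH. pose proof (pow2_ge_0 (cos s)).
  assert (0 <= 8 * eps * (H * cos s ^ 2)) by (apply Rmult_le_pos; [lra | nra]). lra.
Qed.

Lemma disc_ge_1 s H : 0 < H -> 1 <= sqrt (1 + 8 * eps * (H * cos s ^ 2)).
Proof.
  intros HH. rewrite <- sqrt_1 at 1. now apply sqrt_le_1_alt, disc_arg_ge_1.
Qed.

Lemma Ck_a_inv n : Ck n upper a_inv.
Proof.
  unfold a_inv. Ck_auto; unfold upper; intros x y Hy;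
    pose proof (disc_arg_ge_1 x y Hy); pose proof (disc_ge_1 x y Hy); lra.
Qed.

Lemma a_inv_pos s H : 0 < H -> 0 < a_inv s H.
Proof.
  intros HH. pose proof (disc_ge_1 s H HH). unfold a_inv.
  apply Rdiv_lt_0_compat; [apply sqrt_lt_R0 |]; lra.
Qed.

Lemma prim_a_inv_2pi_pos H : 0 < H -> 0 < prim a_inv (2 * PI) H.
Proof.
  intros HH. rewrite <- (prim_0 a_inv H). pose proof PI_RGT_0.
  apply prim_incr; auto using Ck_a_inv, a_inv_pos. lra.
Qed.

Lemma c_expl_pos H : 0 < H -> 0 < c_expl H.
Proof.
  intros HH. unfold c_expl. pose proof PI_RGT_0.
  apply Rdiv_lt_0_compat; [lra | now apply prim_a_inv_2pi_pos].
Qed.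

Lemma Q_expl_shift ch H : 0 < H -> Q_expl (ch + 2 * PI) H = Q_expl ch H + 2 * PI.
Proof.
  intros HH. unfold Q_expl. rewrite prim_shift; auto using Ck_a_inv.
  - unfold c_expl. pose proof (prim_a_inv_2pi_pos H HH). field. lra.
  - intros s. unfold a_inv. now rewrite cos_shift.
Qed.

Lemma Q_expl_shift_Z ch H (k : Z) : 0 < H ->
  Q_expl (ch + 2 * PI * IZR k) H = Q_expl ch H + 2 * PI * IZR k.
Proof.
  intros HH. pose proof (periodic_Z (fun z => Q_expl z H - z) (2 * PI)) as P.
  simpl in P. specialize (P ltac:(intros; rewrite Q_expl_shift by exact HH; ring) ch k). lra.
Qed.

Lemma Q_expl_incr a b H : 0 < H -> a < b -> Q_expl a H < Q_expl b H.
Proof.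
  intros HH Hab. unfold Q_expl. apply Rmult_lt_compat_l; [now apply c_expl_pos|].
  apply prim_incr; auto using Ck_a_inv, a_inv_pos.
Qed.

Lemma Q_expl_partial1 ch H : 0 < H ->
  is_derive (fun z => Q_expl z H) ch (c_expl H * a_inv ch H).
Proof.
  intros HH. apply (is_derive_scal (fun z => prim a_inv z H)).
  apply prim_partial1; auto using Ck_a_inv.
Qed.

Lemma Q_expl_surj Q H : 0 < H -> exists ch, Q_expl ch H = Q.
Proof.
  intros HH. pose proof PI_RGT_0.
  destruct (shift_into_period Q) as [k Hk].
  assert (Q0 : Q_expl 0 H = 0) by (unfold Q_expl; rewrite prim_0; ring).
  assert (Q2 : Q_expl (2 * PI) H = 2 * PI).
  { unfold Q_expl, c_expl. pose proof (prim_a_inv_2pi_pos H HH). field. lra. }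
  destruct (IVT_gen (fun z => Q_expl z H) 0 (2 * PI) (Q + 2 * PI * IZR k)) as [c [_ Hc]].
  - intros z. apply continuity_pt_filterlim.
    apply (ex_derive_continuous (V := R_NormedModule) (fun z => Q_expl z H)).
    eexists. now apply Q_expl_partial1.
  - rewrite Q0, Q2, Rmin_left, Rmax_right; lra.
  - exists (c + 2 * PI * IZR (- k)). rewrite Q_expl_shift_Z, opp_IZR by exact HH. lra.
Qed.

Lemma Ck_c_expl n : Ck n upper (fun _ H => c_expl H).
Proof.
  unfold c_expl. Ck_auto.
  - apply (Ck_comp n upper upper (prim a_inv) (fun _ _ => 2 * PI) (fun _ H => H));
      auto using Ck_prim, Ck_a_inv, Ck_const, Ck_snd.
  - intros x y Hy. now apply prim_a_inv_2pi_pos.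
Qed.

Lemma Ck_Q_expl n : Ck n upper Q_expl.
Proof. apply (Ck_mult n upper (fun _ H => c_expl H)); auto using Ck_c_expl, Ck_prim, Ck_a_inv. Qed.

Definition chi_of_Q (Q H : R) : R := epsilon (inhabits 0) (fun ch => Q_expl ch H = Q).

Lemma Q_chi_of_Q Q H : 0 < H -> Q_expl (chi_of_Q Q H) H = Q.
Proof.
  intros HH. apply (epsilon_spec (inhabits 0) (fun ch => Q_expl ch H = Q)).
  now apply Q_expl_surj.
Qed.

Lemma chi_of_Q_unique ch Q H : 0 < H -> Q_expl ch H = Q -> chi_of_Q Q H = ch.
Proof.
  intros HH E. pose proof (Q_chi_of_Q Q H HH) as E'.
  destruct (Rtotal_order (chi_of_Q Q H) ch) as [L|[L|L]]; auto;
    apply (Q_expl_incr _ _ H HH) in L; lra.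
Qed.

Lemma chi_of_Q_shift Q H : 0 < H -> chi_of_Q (Q + 2 * PI) H = chi_of_Q Q H + 2 * PI.
Proof.
  intros HH. apply chi_of_Q_unique; auto.
  now rewrite Q_expl_shift, Q_chi_of_Q.
Qed.

Lemma Ck_chi_of_Q n : Ck n upper chi_of_Q.
Proof.
  destruct (Ck_Q_expl (S n)) as (Q1 & Q2 & HD & H1 & H2).
  apply Ck_S, (Ck_inverse Q_expl Q1 Q2); auto.
  - intros ch H HH. replace (Q1 ch H) with (c_expl H * a_inv ch H).
    + apply Rmult_lt_0_compat; auto using c_expl_pos, a_inv_pos.
    + rewrite <- (is_derive_unique _ _ _ (Q_expl_partial1 ch H HH)).
      apply is_derive_unique, (is_derive_partial1 _ _ _ _ (Q2 ch H)), HD, HH.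
  - intros; now apply Q_expl_incr.
  - intros; now apply Q_chi_of_Q.
Qed.

Lemma Ck_x_expl n : Ck n upper x_expl.
Proof.
  unfold x_expl. Ck_auto; unfold upper; intros x y Hy; auto;
    pose proof (disc_arg_ge_1 x y Hy); pose proof (disc_ge_1 x y Hy);
    try apply sqrt_lt_R0; lra.
Qed.

Lemma Ck_v_expl n : Ck n upper v_expl.
Proof. unfold v_expl. Ck_auto; unfold upper; intros x y Hy; lra. Qed.

Definition xQK (Q K : R) : R := x_expl (chi_of_Q Q K) K.
Definition vQK (Q K : R) : R := v_expl (chi_of_Q Q K) K.

Lemma Ck_xQK n : Ck n upper xQK.
Proof.
  apply (Ck_comp n upper upper x_expl chi_of_Q (fun _ K => K));
    auto using Ck_x_expl, Ck_chi_of_Q, Ck_snd.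
Qed.

Lemma Ck_vQK n : Ck n upper vQK.
Proof.
  apply (Ck_comp n upper upper v_expl chi_of_Q (fun _ K => K));
    auto using Ck_v_expl, Ck_chi_of_Q, Ck_snd.
Qed.

Lemma xQK_shift Q K : 0 < K -> xQK (Q + 2 * PI) K = xQK Q K.
Proof. intros HK. unfold xQK, x_expl. now rewrite chi_of_Q_shift, cos_shift. Qed.

Lemma vQK_shift Q K : 0 < K -> vQK (Q + 2 * PI) K = vQK Q K.
Proof. intros HK. unfold vQK, v_expl. now rewrite chi_of_Q_shift, sin_shift. Qed.

Lemma Phi_x_expl ch H : 0 < H -> Phi eps (x_expl ch H) = H * cos ch ^ 2.
Proof.
  intros HH. set (y := H * cos ch ^ 2). set (S := sqrt (1 + 8 * eps * y)).
  pose proof (disc_arg_ge_1 ch H HH). pose proof (disc_ge_1 ch H HH). fold y S in H0, H1.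
  assert (HS : S ^ 2 = 1 + 8 * eps * y) by (apply pow2_sqrt; lra).
  assert (Hx2 : x_expl ch H ^ 2 = 4 * y / (1 + S)).
  { unfold x_expl. fold y S. unfold Rdiv.
    rewrite !Rpow_mult_distr, pow_inv, !pow2_sqrt by lra. unfold y. ring. }
  unfold Phi. replace (x_expl ch H ^ 4) with ((x_expl ch H ^ 2) ^ 2) by ring.
  rewrite Hx2. field_simplify; [|lra]. rewrite HS. field. lra.
Qed.

Lemma Hen_expl ch H : 0 < H -> Hen eps (x_expl ch H) (v_expl ch H) = H.
Proof.
  intros HH. unfold Hen. rewrite Phi_x_expl by exact HH. unfold v_expl.
  rewrite Rpow_mult_distr, pow2_sqrt by lra. pose proof (sin2_cos2 ch). unfold Rsqr in *. nra.
Qed.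

Lemma expl_neq_0 ch H : 0 < H -> (x_expl ch H, v_expl ch H) <> (0, 0).
Proof.
  intros HH E. injection E as E1 E2. pose proof (Hen_expl ch H HH) as E.
  rewrite E1, E2 in E. unfold Hen, Phi in E. lra.
Qed.

Lemma sin_chi x v H : 0 < H -> Hen eps x v = H ->
  -1 <= v / sqrt (2 * H) <= 1 /\ sin (chi eps x v) = v / sqrt (2 * H).
Proof.
  intros HH He.
  assert (Hz2 : (v / sqrt (2 * H)) ^ 2 = v ^ 2 / (2 * H)).
  { unfold Rdiv. rewrite Rpow_mult_distr, pow_inv, pow2_sqrt by lra. reflexivity. }
  assert (Hz : -1 <= v / sqrt (2 * H) <= 1).
  { assert (0 <= Phi eps x).
    { unfold Phi. pose proof (pow2_ge_0 x). pose proof (pow2_ge_0 (x ^ 2)).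
      replace (x ^ 4) with ((x ^ 2) ^ 2) by ring. nra. }
    assert ((v / sqrt (2 * H)) ^ 2 <= 1).
    { rewrite Hz2. apply (Rmult_le_reg_r (2 * H)); [lra|]. unfold Hen in He.
      unfold Rdiv. rewrite Rmult_assoc, Rinv_l by lra. lra. }
    nra. }
  split; auto. unfold chi. rewrite He.
  destruct (Rlt_dec 0 x); [|rewrite sin_PI_x]; now rewrite sin_asin.
Qed.

Lemma chi_expl ch H : 0 < H -> eq_mod2pi (chi eps (x_expl ch H) (v_expl ch H)) ch.
Proof.
  intros HH. pose proof (disc_ge_1 ch H HH).
  destruct (sin_chi _ _ _ HH (Hen_expl ch H HH)) as [Hz Hs].
  assert (E : v_expl ch H / sqrt (2 * H) = sin ch).
  { unfold v_expl. field. apply Rgt_not_eq, sqrt_lt_R0. lra. }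
  rewrite E in Hz, Hs. apply eq_mod2pi_sin_cos; auto.
  assert (Hcos : sqrt (1 - (sin ch)²) = Rabs (cos ch)).
  { rewrite <- sqrt_Rsqr_abs. f_equal. pose proof (sin2_cos2 ch). lra. }
  (* x_expl has the sign of cos ch, which selects the branch of chi *)
  assert (Hx : x_expl ch H
               = cos ch * (2 * sqrt H / sqrt (1 + sqrt (1 + 8 * eps * (H * cos ch ^ 2))))).
  { unfold x_expl. field. apply Rgt_not_eq, sqrt_lt_R0. lra. }
  assert (Hp : 0 < 2 * sqrt H / sqrt (1 + sqrt (1 + 8 * eps * (H * cos ch ^ 2)))).
  { apply Rdiv_lt_0_compat; [apply Rmult_lt_0_compat; [lra | now apply sqrt_lt_R0] |].
    apply sqrt_lt_R0. lra. }
  unfold chi. rewrite Hen_expl, E by exact HH. rewrite Hx.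
  destruct (Rlt_dec 0 _) as [L|L].
  - rewrite cos_asin, Hcos by exact Hz. apply Rabs_pos_eq. nra.
  - rewrite Rtrigo_facts.cos_pi_minus, cos_asin, Hcos by exact Hz.
    rewrite Rabs_left1; [ring | nra].
Qed.

Lemma Phi_x_of ch H : 0 < H -> Phi eps (x_of eps ch H) = H * cos ch ^ 2.
Proof.
  intros HH. unfold x_of.
  match goal with |- context [epsilon ?i ?P] =>
    assert (Ex : exists x, P x) by (exists (x_expl ch H), (v_expl ch H);
      auto using expl_neq_0, Hen_expl, chi_expl);
    destruct (epsilon_spec i P Ex) as [v [_ [He [k Hk]]]];
    set (x := epsilon i P) in *
  end.
  destruct (sin_chi x v H HH He) as [_ Hs].
  rewrite Hk, (periodic_Z sin _ sin_shift) in Hs.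
  assert (Hv2 : v ^ 2 = 2 * H * sin ch ^ 2).
  { assert (Hq : 0 < sqrt (2 * H)) by (apply sqrt_lt_R0; lra).
    replace v with (sqrt (2 * H) * sin ch) by (rewrite Hs; field; lra).
    rewrite Rpow_mult_distr, pow2_sqrt by lra. ring. }
  unfold Hen in He. pose proof (sin2_cos2 ch). unfold Rsqr in *. nra.
Qed.

Lemma a_fun_a_inv ch H : 0 < H -> a_fun eps ch H = / a_inv ch H.
Proof.
  intros HH. unfold a_fun, a_inv. set (x := x_of eps ch H).
  rewrite <- (Phi_x_of ch H HH). fold x. unfold Phi.
  assert (Hex : 0 <= eps * x ^ 2) by (apply Rmult_le_pos; [lra | apply pow2_ge_0]).
  replace (1 + 8 * eps * (x ^ 2 / 2 + eps * x ^ 4 / 2)) with ((1 + 2 * eps * x ^ 2) ^ 2) by field.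
  rewrite sqrt_pow2 by lra.
  replace (1 + (1 + 2 * eps * x ^ 2)) with (2 * (1 + eps * x ^ 2)) by ring.
  rewrite sqrt_mult by lra.
  assert (Q2 : 0 < sqrt 2) by (apply sqrt_lt_R0; lra).
  assert (Q3 : 0 < sqrt (1 + eps * x ^ 2)) by (apply sqrt_lt_R0; lra).
  assert (Q4 : sqrt 2 * sqrt 2 = 2) by (apply sqrt_sqrt; lra).
  replace (2 * (1 + 2 * eps * x ^ 2)) with (sqrt 2 * sqrt 2 * (1 + 2 * eps * x ^ 2))
    by (rewrite Q4; ring).
  field. split; lra.
Qed.

Lemma c_fun_expl H : 0 < H -> c_fun eps H = c_expl H.
Proof.
  intros HH. unfold c_fun, c_expl, prim. f_equal. apply RInt_ext. intros x _.
  now rewrite a_fun_a_inv, Rinv_inv.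
Qed.

Lemma Q_fun_expl ch H : 0 < H -> Q_fun eps ch H = Q_expl ch H.
Proof.
  intros HH. unfold Q_fun, Q_expl. rewrite c_fun_expl by exact HH. f_equal.
  apply RInt_ext. intros x _. now rewrite a_fun_a_inv, Rinv_inv.
Qed.

End Oscillator.

Lemma constant_of_derive_0 (phi : R -> R) t : 0 <= t ->
  (forall s, 0 < s -> derivable_pt_lim phi s 0) ->
  (forall e : posreal, exists d : posreal, forall s, 0 <= s < d -> Rabs (phi s - phi 0) < e) ->
  phi t = phi 0.
Proof.
  intros Ht Hd Hc. destruct (Req_dec t 0) as [->|Ht0]; auto.
  assert (Flat : forall s, 0 < s <= t -> phi s = phi t).
  { intros s [Hs Hst]. destruct (Req_dec s t) as [->|Ne]; auto.
    destruct (MVT_cor2 phi (fun _ => 0) s t) as [x [Ex _]]; [lra | | lra].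
    intros x Hx. apply Hd. lra. }
  destruct (Req_dec (phi t) (phi 0)) as [E|NE]; auto. exfalso.
  assert (He : 0 < Rabs (phi t - phi 0)) by (apply Rabs_pos_lt; lra).
  destruct (Hc (mkposreal _ He)) as [d Hd']. simpl in Hd'.
  pose proof (cond_pos d). pose proof (Rmin_l t (d / 2)). pose proof (Rmin_r t (d / 2)).
  assert (Hs : 0 < Rmin t (d / 2)) by (apply Rmin_pos; lra).
  specialize (Hd' (Rmin t (d / 2)) ltac:(lra)).
  rewrite Flat in Hd' by lra. lra.
Qed.

Lemma right_continuity_along_line (F : R -> R -> R) Q0 c :
  filterlim (fun p : R * R => F (fst p) (snd p))
    (within (fun p : R * R => 0 <= fst p) (locally (0, Q0))) (locally (F 0 Q0)) ->
  forall e : posreal, exists d : posreal, forall s, 0 <= s < d ->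
    Rabs (F s (Q0 - c * s) - F 0 Q0) < e.
Proof.
  intros Hlim e.
  specialize (Hlim (ball (F 0 Q0) e) (locally_ball _ e)).
  apply (locally_2d_locally (fun u v => 0 <= u -> ball (F 0 Q0) e (F u v))) in Hlim.
  destruct Hlim as [d Hd].
  assert (Hd' : 0 < Rmin d (d / (Rabs c + 1)))
    by (pose proof (cond_pos d); pose proof (Rabs_pos c);
        apply Rmin_pos; [lra | apply Rdiv_lt_0_compat; lra]).
  exists (mkposreal _ Hd'). simpl. intros s Hs.
  pose proof (cond_pos d). pose proof (Rabs_pos c).
  pose proof (Rmin_l d (d / (Rabs c + 1))). pose proof (Rmin_r d (d / (Rabs c + 1))).
  apply (Hd s (Q0 - c * s)); [rewrite Rminus_0_r, Rabs_pos_eq; lra | | lra].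
  replace (Q0 - c * s - Q0) with (- (c * s)) by ring.
  rewrite Rabs_Ropp, Rabs_mult, (Rabs_pos_eq s) by lra.
  apply Rle_lt_trans with (Rabs c * (d / (Rabs c + 1))); [apply Rmult_le_compat_l; lra|].
  apply Rlt_le_trans with ((Rabs c + 1) * (d / (Rabs c + 1))); [|right; field; lra].
  apply Rmult_lt_compat_r; [apply Rdiv_lt_0_compat|]; lra.
Qed.

Lemma Yop_shift eps (F : R -> R -> R -> R) (h : R -> R -> R) t Q K l1 l2 :
  0 < K -> ex_derive (c_fun eps) K ->
  (forall q k, 0 < k -> F t q k = h (q + c_fun eps k * t) k) ->
  differentiable_pt_lim h (Q + c_fun eps K * t) K l1 l2 ->
  Yop eps F t Q K = - l2.
Proof.
  intros HK Hc HF Hd. unfold Yop.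
  assert (D1 : Derive (fun q => F t q K) Q = l1).
  { rewrite (Derive_ext _ (fun q => h (q + c_fun eps K * t) K)) by auto.
    apply is_derive_unique, is_derive_Reals.
    replace l1 with (l1 * 1 + l2 * 0) by ring.
    apply (derivable_pt_lim_comp_2d h (fun q => q + c_fun eps K * t) (fun _ => K)); auto.
    - apply is_derive_Reals. auto_derive; auto.
    - apply derivable_pt_lim_const. }
  assert (D2 : Derive (fun k => F t Q k) K = l1 * (Derive (c_fun eps) K * t) + l2 * 1).
  { rewrite (Derive_ext_loc _ (fun k => h (Q + c_fun eps k * t) k)).
    - apply is_derive_unique, is_derive_Reals.
      apply (derivable_pt_lim_comp_2d h (fun k => Q + c_fun eps k * t) (fun k => k));
        auto using derivable_pt_lim_id.
      apply is_derive_Reals. auto_derive; auto. now rewrite Rmult_1_l.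
    - apply filter_imp with (2 := open_gt 0 K HK). intros; auto. }
  rewrite D1, D2. ring.
Qed.

Lemma c_fun_ex_derive eps K : 0 < eps -> 0 < K -> ex_derive (c_fun eps) K.
Proof.
  intros Heps HK. exists (dv (fun _ H => c_expl eps H) 0 K).
  apply (is_derive_ext_loc (fun H => c_expl eps H)).
  - apply filter_imp with (2 := open_gt 0 K HK). intros; now rewrite c_fun_expl.
  - apply (Ck_upper_is_derive2 0 (fun _ H => c_expl eps H)); auto using Ck_c_expl.
Qed.

Section Transport.
Variable eps : R.
Hypothesis eps_pos : 0 < eps.
Variable fbar : R -> R -> R -> R.
Hypothesis fbar_pde : forall t Q K, 0 < t -> 0 < K ->
  exists dQ, differentiable_pt_lim (fun t' q => fbar t' q K) t Q (c_fun eps K * dQ) dQ.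
Hypothesis fbar_cont : forall Q K, 0 < K ->
  filterlim (fun p : R * R => fbar (fst p) (snd p) K)
    (within (fun p : R * R => 0 <= fst p) (locally (0, Q))) (locally (fbar 0 Q K)).

Lemma fbar_transport t Q K : 0 <= t -> 0 < K -> fbar t Q K = fbar 0 (Q + c_fun eps K * t) K.
Proof.
  (* fbar is constant along the characteristic s |-> (s, Q + c(K) (t - s)) *)
  intros Ht HK. set (c := c_fun eps K).
  set (phi := fun s => fbar s (Q + c * t - c * s) K).
  replace (fbar t Q K) with (phi t) by (unfold phi; f_equal; ring).
  replace (fbar 0 (Q + c * t) K) with (phi 0) by (unfold phi; f_equal; ring).
  apply constant_of_derive_0; auto.
  - intros s Hs. destruct (fbar_pde s (Q + c * t - c * s) K Hs HK) as [dQ HdQ].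
    replace 0 with (c * dQ * 1 + dQ * (- c)) by ring.
    apply (derivable_pt_lim_comp_2d (fun t' q => fbar t' q K) (fun s => s)
      (fun s => Q + c * t - c * s)); auto using derivable_pt_lim_id.
    apply is_derive_Reals. auto_derive; auto. ring.
  - unfold phi. rewrite Rmult_0_r, Rminus_0_r.
    exact (right_continuity_along_line (fun u v => fbar u v K) _ c (fbar_cont _ K HK)).
Qed.

Lemma Yop_profile g t Q K : Ck 2 upper g -> (forall q k, 0 < k -> fbar 0 q k = g q k) ->
  0 <= t -> 0 < K ->
  Yop eps fbar t Q K = - dv g (Q + c_fun eps K * t) K /\
  Yop eps (Yop eps fbar) t Q K = dv (dv g) (Q + c_fun eps K * t) K.
Proof.
  intros Hg Hprof Ht HK.
  destruct (Ck_upper_partials 1 g Hg) as [Dg Hdg].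
  destruct (Ck_upper_partials 0 (dv g) Hdg) as [Ddg _].
  assert (Shift : forall q k, 0 < k -> fbar t q k = g (q + c_fun eps k * t) k).
  { intros q k Hk. rewrite fbar_transport by auto. apply Hprof, Hk. }
  assert (Y1 : forall q k, 0 < k -> Yop eps fbar t q k = - dv g (q + c_fun eps k * t) k).
  { intros q k Hk. apply (Yop_shift eps _ g t q k (dx g (q + c_fun eps k * t) k));
      auto using c_fun_ex_derive. }
  split; [now apply Y1|].
  rewrite <- (Ropp_involutive (dv (dv g) _ K)).
  apply (Yop_shift eps _ (fun q k => - dv g q k) t Q K (- dx (dv g) (Q + c_fun eps K * t) K));
    auto using c_fun_ex_derive, differentiable_pt_lim_opp.
Qed.

End Transport.

Lemma C2sum_bounds f M x v : C2sum f x v <= M ->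
  Rabs (f x v) <= M /\ Rabs (dx f x v) <= M /\ Rabs (dv f x v) <= M /\
  Rabs (dx (dx f) x v) <= M /\ Rabs (dx (dv f) x v) <= M /\ Rabs (dv (dv f) x v) <= M.
Proof.
  unfold C2sum. intros H.
  pose proof (Rabs_pos (f x v)). pose proof (Rabs_pos (dx f x v)).
  pose proof (Rabs_pos (dv f x v)). pose proof (Rabs_pos (dx (dx f) x v)).
  pose proof (Rabs_pos (dx (dv f) x v)). pose proof (Rabs_pos (dv (dv f) x v)).
  repeat split; lra.
Qed.

Lemma Rabs_plus_le a b A B : Rabs a <= A -> Rabs b <= B -> Rabs (a + b) <= A + B.
Proof. intros. eapply Rle_trans; [apply Rabs_triang | lra]. Qed.

Lemma Rabs_mult_le a b A B : Rabs a <= A -> Rabs b <= B -> Rabs (a * b) <= A * B.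
Proof. intros. rewrite Rabs_mult. apply Rmult_le_compat; auto using Rabs_pos. Qed.

Section Chain_rule.
Variables (f X V : R -> R -> R).
Hypothesis f_smooth : smooth2 f.
Hypothesis X_C2 : Ck 2 upper X.
Hypothesis V_C2 : Ck 2 upper V.

Lemma is_derive_comp_partial2 w q K : 0 < K ->
  is_derive (fun k => pder w f (X q k) (V q k)) K
    (pder (true :: w) f (X q K) (V q K) * dv X q K
     + pder (false :: w) f (X q K) (V q K) * dv V q K).
Proof.
  intros HK. apply is_derive_Reals, derivable_pt_lim_comp_2d;
    [apply smooth2_differentiable, f_smooth | |]; apply is_derive_Reals;
    eapply Ck_upper_is_derive2; eauto.
Qed.

Lemma dv_comp_bounds M B q K : 0 < K -> (forall x v, C2sum f x v <= M) ->
  Rabs (dv X q K) <= B -> Rabs (dv V q K) <= B ->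
  Rabs (dv (dv X) q K) <= B -> Rabs (dv (dv V) q K) <= B ->
  Rabs (dv (fun q k => f (X q k) (V q k)) q K) <= 2 * B * M /\
  Rabs (dv (dv (fun q k => f (X q k) (V q k))) q K) <= (4 * B ^ 2 + 2 * B) * M.
Proof.
  intros HK HM B1 B2 B3 B4.
  destruct (C2sum_bounds f M _ _ (HM (X q K) (V q K))) as (M0 & Mx & Mv & Mxx & Mxv & Mvv).
  assert (D1 : forall k, 0 < k -> dv (fun q k => f (X q k) (V q k)) q k =
     dx f (X q k) (V q k) * dv X q k + dv f (X q k) (V q k) * dv V q k).
  { intros k Hk. apply is_derive_unique, (is_derive_comp_partial2 nil q k Hk). }
  assert (D2 : is_derive (fun k : R => dv (fun q k => f (X q k) (V q k)) q k) K
     ((dx (dx f) (X q K) (V q K) * dv X q K + dv (dx f) (X q K) (V q K) * dv V q K) * dv X q K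
      + dx f (X q K) (V q K) * dv (dv X) q K
      + ((dx (dv f) (X q K) (V q K) * dv X q K + dv (dv f) (X q K) (V q K) * dv V q K) * dv V q K
      + dv f (X q K) (V q K) * dv (dv V) q K))).
  { assert (DX : forall Y, Ck 2 upper Y -> is_derive (fun k => dv Y q k) K (dv (dv Y) q K))
      by (intros Y HY; apply (Ck_upper_is_derive2 0); auto; now apply Ck_upper_partials).
    apply (is_derive_ext_loc (fun k => dx f (X q k) (V q k) * dv X q k
                                       + dv f (X q k) (V q k) * dv V q k)).
    { apply filter_imp with (2 := open_gt 0 K HK). intros k Hk. symmetry. now apply D1. }
    apply (is_derive_plus (fun k => dx f (X q k) (V q k) * dv X q k)
                          (fun k => dv f (X q k) (V q k) * dv V q k)).
    - apply (is_derive_mult (fun k => dx f (X q k) (V q k)) (fun k => dv X q k));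
        [apply (is_derive_comp_partial2 (true :: nil) q K HK) | auto | apply Rmult_comm].
    - apply (is_derive_mult (fun k => dv f (X q k) (V q k)) (fun k => dv V q k));
        [apply (is_derive_comp_partial2 (false :: nil) q K HK) | auto | apply Rmult_comm]. }
  split.
  - rewrite D1 by exact HK. eapply Rle_trans.
    + apply Rabs_plus_le; apply Rabs_mult_le; eauto.
    + lra.
  - unfold dv at 1. rewrite (is_derive_unique _ _ _ D2), (smooth2_dv_dx f f_smooth).
    assert (0 <= B) by (eapply Rle_trans; [apply Rabs_pos | exact B1]).
    assert (0 <= M) by (eapply Rle_trans; [apply Rabs_pos | exact M0]).
    eapply Rle_trans.
    + repeat first [apply Rabs_plus_le | apply Rabs_mult_le]; eauto.
    + right. ring.
Qed.

End Chain_rule.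

Lemma dv_periodic_bounded F a b : 0 < a -> Ck 2 upper F ->
  (forall q K, 0 < K -> F (q + 2 * PI) K = F q K) ->
  exists B, 0 <= B /\ forall q K, a <= K <= b ->
    Rabs (dv F q K) <= B /\ Rabs (dv (dv F) q K) <= B.
Proof.
  intros Ha HF Hper.
  assert (Per1 : forall q K, 0 < K -> dv F (q + 2 * PI) K = dv F q K).
  { intros q K HK. apply Derive_ext_loc. apply filter_imp with (2 := open_gt 0 K HK).
    intros; now apply Hper. }
  assert (Per2 : forall q K, 0 < K -> dv (dv F) (q + 2 * PI) K = dv (dv F) q K).
  { intros q K HK. apply Derive_ext_loc. apply filter_imp with (2 := open_gt 0 K HK).
    intros; now apply Per1. }
  destruct (Ck_upper_partials 1 F HF) as [_ HF1].
  destruct (Ck_upper_partials 0 (dv F) HF1) as [_ HF2].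
  destruct (periodic_bounded (dv F) a b Ha (Ck_S 0 _ _ HF1) Per1) as [B1 [_ HB1]].
  destruct (periodic_bounded (dv (dv F)) a b Ha HF2 Per2) as [B2 [_ HB2]].
  exists (Rmax (Rabs B1) B2). split; [eapply Rle_trans; [apply Rabs_pos | apply Rmax_l]|].
  intros q K HK. pose proof (Rmax_l (Rabs B1) B2). pose proof (Rmax_r (Rabs B1) B2).
  pose proof (RRle_abs B1). specialize (HB1 q K HK). specialize (HB2 q K HK). lra.
Qed.

Lemma xQK_vQK_derivatives_bounded eps cs : 0 < eps -> 0 < cs ->
  exists B, 0 <= B /\ forall q K, cs <= K <= / cs ->
    Rabs (dv (xQK eps) q K) <= B /\ Rabs (dv (dv (xQK eps)) q K) <= B /\
    Rabs (dv (vQK eps) q K) <= B /\ Rabs (dv (dv (vQK eps)) q K) <= B.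
Proof.
  intros Heps Hcs.
  destruct (dv_periodic_bounded (xQK eps) cs (/ cs) Hcs (Ck_xQK eps Heps 2)
    (fun q K HK => xQK_shift eps Heps q K HK)) as [Bx [HBx Bxb]].
  destruct (dv_periodic_bounded (vQK eps) cs (/ cs) Hcs (Ck_vQK eps Heps 2)
    (fun q K HK => vQK_shift eps Heps q K HK)) as [Bv [HBv Bvb]].
  exists (Rmax Bx Bv). split; [eapply Rle_trans; [exact HBx | apply Rmax_l]|].
  intros q K HK. pose proof (Rmax_l Bx Bv). pose proof (Rmax_r Bx Bv).
  destruct (Bxb q K HK), (Bvb q K HK). repeat split; lra.
Qed.

Lemma fbar0_profile eps (fbar : R -> R -> R -> R) (f0 : R -> R -> R) Q K : 0 < eps ->
  (forall t Q K, fbar t (Q + 2 * PI) K = fbar t Q K) ->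
  (forall x v, (x, v) <> (0, 0) -> f0 x v = fbar 0 (Q_of eps x v) (K_of eps x v)) ->
  0 < K -> fbar 0 Q K = f0 (xQK eps Q K) (vQK eps Q K).
Proof.
  intros Heps Hper Hinit HK. unfold xQK, vQK. set (ch := chi_of_Q eps Q K).
  rewrite Hinit by now apply expl_neq_0.
  unfold Q_of, K_of. rewrite Hen_expl, Q_fun_expl by auto.
  destruct (chi_expl eps Heps ch K HK) as [k ->].
  unfold ch. rewrite Q_expl_shift_Z, Q_chi_of_Q by auto.
  symmetry. apply (periodic_Z (fun q => fbar 0 q K)). intros; apply Hper.
Qed.

Theorem lemma4p2 :
  forall eps cs : R, 0 < eps -> 0 < cs ->
  exists C : R, 0 < C /\
  forall (fbar : R -> R -> R -> R) (f0 : R -> R -> R),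
    (* fbar lives on T^1 in Q *)
    (forall t Q K, fbar t (Q + 2 * PI) K = fbar t Q K) ->
    (* d_t fbar - c(K) d_Q fbar = 0 for t > 0, K > 0 (classical sense) *)
    (forall t Q K, 0 < t -> 0 < K ->
       exists dQ, differentiable_pt_lim (fun t' q => fbar t' q K) t Q (c_fun eps K * dQ) dQ) ->
    (* continuity up to t = 0 *)
    (forall Q K, 0 < K ->
       filterlim (fun p : R * R => fbar (fst p) (snd p) K)
         (within (fun p : R * R => 0 <= fst p) (locally (0, Q)))
         (locally (fbar 0 Q K))) ->
    (* initial data in (x,v) variables *)
    (forall x v, (x, v) <> (0, 0) -> f0 x v = fbar 0 (Q_of eps x v) (K_of eps x v)) ->
    smooth2 f0 ->
    (forall x v, 0 <= f0 x v) ->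
    (forall x v, f0 x v <> 0 -> cs <= Hen eps x v <= / cs) ->
    forall M : R, (forall x v, C2sum f0 x v <= M) ->
    forall t Q K, 0 <= t -> cs <= K <= / cs ->
      Rabs (fbar t Q K) + Rabs (Yop eps fbar t Q K) + Rabs (Yop eps (Yop eps fbar) t Q K)
        <= C * M.
Proof.
  intros eps cs Heps Hcs.
  destruct (xQK_vQK_derivatives_bounded eps cs Heps Hcs) as [B [HB0 HB]].
  exists (1 + 4 * B + 4 * B ^ 2). split; [nra|].
  intros fbar f0 Hper Hpde Hcont Hinit Hsm _ _ M HM t Q K Ht HK.
  assert (HK0 : 0 < K) by lra.
  set (g := fun q k => f0 (xQK eps q k) (vQK eps q k)).
  assert (Hg : Ck 2 upper g).
  { apply (Ck_comp 2 (fun _ _ => True) upper (pder nil f0));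
      auto using smooth2_Ck, Ck_xQK, Ck_vQK. }
  assert (Hprof : forall q k, 0 < k -> fbar 0 q k = g q k)
    by (intros; now apply fbar0_profile).
  destruct (Yop_profile eps Heps fbar Hpde Hcont g t Q K Hg Hprof Ht HK0) as [-> ->].
  rewrite (fbar_transport eps fbar Hpde Hcont), Hprof, Rabs_Ropp by auto.
  set (q := Q + c_fun eps K * t).
  destruct (HB q K HK) as (B1 & B2 & B3 & B4).
  destruct (dv_comp_bounds f0 (xQK eps) (vQK eps) Hsm (Ck_xQK eps Heps 2) (Ck_vQK eps Heps 2)
    M B q K HK0 HM B1 B3 B2 B4) as [D1 D2].
  destruct (C2sum_bounds f0 M _ _ (HM (xQK eps q K) (vQK eps q K))) as [D0 _].
  unfold g. lra.
Qed.
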